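(* Let $\mu$ be a translation invariant probability measure on $X=\{0,1\}^{\mathbb{Z}}$ with finite total entropy $S(\mu)=\lim_{j\to\infty}S(\pi_j\mu)<\infty$. Then $\mu$ is a PC measure, i.e. $\mu$ is supported on the (countable) set of periodic configurations.
   Context: $\pi_j\mu$ is the marginal of $\mu$ on the coordinates $0,\ldots,j$, and $S(\nu)=-\sum_q\nu(q)\log\nu(q)$ is the Gibbs–Shannon entropy of a measure on a finite set; the limit defining the total entropy exists since $S(\pi_j\mu)$ is nondecreasing in $j$. *)

From Stdlib Require Import Reals ZArith List.
Open Scope R_scope.

Definition config := Z -> bool.

(* Borel sigma-algebra: generated by the one-coordinate cylinders *)
Inductive measurable : (config -> Prop) -> Prop :=
| meas_cyl : forall (i : Z) (b : bool), measurable (fun x => x i = b)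
| meas_compl : forall A, measurable A -> measurable (fun x => ~ A x)
| meas_union : forall A : nat -> config -> Prop,
    (forall n, measurable (A n)) -> measurable (fun x => exists n, A n x).

(* probability measure on the Borel sets (values outside measurable sets are irrelevant) *)
Definition is_prob_measure (mu : (config -> Prop) -> R) : Prop :=
  (forall A, measurable A -> 0 <= mu A) /\
  mu (fun _ => True) = 1 /\
  (forall A : nat -> config -> Prop,
      (forall n, measurable (A n)) ->
      (forall m n x, m <> n -> A m x -> A n x -> False) ->
      infinite_sum (fun n => mu (A n)) (mu (fun x => exists n, A n x))).

Definition shift (x : config) : config := fun i => x (i + 1)%Z.

Definition translation_invariant (mu : (config -> Prop) -> R) : Prop :=
  forall A, measurable A -> mu (fun x => A (shift x)) = mu A.

Fixpoint words (n : nat) : list (list bool) :=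
  match n with
  | O => nil :: nil
  | S n' => map (cons false) (words n') ++ map (cons true) (words n')
  end.

Definition cyl (w : list bool) : config -> Prop :=
  fun x => forall i : nat, (i < length w)%nat -> x (Z.of_nat i) = nth i w false.

(* pi_j mu, the marginal on coordinates 0..j, evaluated at the word q *)
Definition marginal (mu : (config -> Prop) -> R) (j : nat) (q : list bool) : R :=
  mu (cyl q).

Definition xlogx (t : R) : R := if Req_EM_T t 0 then 0 else t * ln t.

Definition entropy_j (mu : (config -> Prop) -> R) (j : nat) : R :=
  - fold_right Rplus 0 (map (fun q => xlogx (marginal mu j q)) (words (S j))).

Definition periodic_configs : config -> Prop :=
  fun x => exists p : Z, (0 < p)%Z /\ forall n : Z, x (n + p)%Z = x n.

From Pilot Require Import Defs.
From Stdlib Require Import Reals ZArith List Lra Lia Classical FunctionalExtensionality PropExtensionality.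
Open Scope R_scope.

(* If the non-periodic configurations had mass [eta > 0], bounded entropy would
   force, for every [j], a cylinder of length [j + 1] carrying a fixed mass [c > 0]
   of them: a cylinder of small probability [p] costs [- p ln p], much more than [p].
   Centring these cylinders by translation invariance and letting [j] grow yields a
   non-periodic point [x] with [mu {x} >= c]; its translates are then infinitely
   many disjoint atoms of mass [c], contradicting sigma-additivity. *)

Lemma set_ext (A B : config -> Prop) : (forall x, A x <-> B x) -> A = B.
Proof.
  intro H; apply functional_extensionality; intro x.
  apply propositional_extensionality; auto.
Qed.

Lemma measurable_ext A B : measurable A -> (forall x, A x <-> B x) -> measurable B.
Proof. intros HA H; rewrite <- (set_ext A B H); exact HA. Qed.

Lemma measure_ext (mu : (config -> Prop) -> R) A B :
  (forall x, A x <-> B x) -> mu A = mu B.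
Proof. intro H; rewrite (set_ext A B H); reflexivity. Qed.

Lemma measurableT : measurable (fun _ => True).
Proof.
  apply measurable_ext with
    (fun x => exists n : nat, match n with O => x 0%Z = true | _ => ~ x 0%Z = true end).
  - apply meas_union; intros [|n]; [apply meas_cyl | apply meas_compl, meas_cyl].
  - intro x; split; [auto | intros _].
    destruct (classic (x 0%Z = true)); [exists O | exists 1%nat]; auto.
Qed.

Lemma measurable0 : measurable (fun _ => False).
Proof.
  apply measurable_ext with (fun x => ~ True); [apply meas_compl, measurableT | tauto].
Qed.

Lemma measurableU A B :
  measurable A -> measurable B -> measurable (fun x => A x \/ B x).
Proof.
  intros HA HB.
  apply measurable_ext with
    (fun x => exists n : nat, (match n with O => A | 1%nat => B | _ => fun _ => False end) x).
  - apply meas_union; intros [|[|n]]; auto; apply measurable0.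
  - intro x; split.
    + intros [[|[|n]] H]; auto; contradiction.
    + intros [H|H]; [exists O | exists 1%nat]; auto.
Qed.

Lemma measurableI A B :
  measurable A -> measurable B -> measurable (fun x => A x /\ B x).
Proof.
  intros HA HB; apply measurable_ext with (fun x => ~ (~ A x \/ ~ B x)).
  - apply meas_compl, measurableU; apply meas_compl; auto.
  - intro x; tauto.
Qed.

Lemma measurable_forall_nat (A : nat -> config -> Prop) :
  (forall n, measurable (A n)) -> measurable (fun x => forall n, A n x).
Proof.
  intro HA; apply measurable_ext with (fun x => ~ exists n, ~ A n x).
  - apply meas_compl, meas_union; intro n; apply meas_compl; auto.
  - intro x; split.
    + intros H n; apply NNPP; intro H'; apply H; eauto.
    + intros H [n Hn]; auto.
Qed.

Lemma measurable_forall_Z (A : Z -> config -> Prop) :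
  (forall i, measurable (A i)) -> measurable (fun x => forall i, A i x).
Proof.
  intro HA.
  apply measurable_ext with
    (fun x => forall n : nat, A (Z.of_nat n) x /\ A (- Z.of_nat n)%Z x).
  - apply measurable_forall_nat; intro; apply measurableI; auto.
  - intro x; split; [intros H i | intros H n; split; auto].
    destruct (Z_le_gt_dec 0 i).
    + replace i with (Z.of_nat (Z.to_nat i)) by lia; apply H.
    + replace i with (- Z.of_nat (Z.to_nat (- i)))%Z by lia; apply H.
Qed.

Lemma measurable_const_and (P : Prop) A :
  measurable A -> measurable (fun x => P /\ A x).
Proof.
  intro HA; destruct (classic P).
  - apply measurable_ext with A; tauto.
  - apply measurable_ext with (fun _ => False); [apply measurable0 | tauto].
Qed.

Lemma measurable_const_imp (P : Prop) A :
  measurable A -> measurable (fun x => P -> A x).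
Proof.
  intro HA; destruct (classic P).
  - apply measurable_ext with A; tauto.
  - apply measurable_ext with (fun _ => True); [apply measurableT | tauto].
Qed.

Lemma measurable_eq_coord i j : measurable (fun x : config => x i = x j).
Proof.
  apply measurable_ext with
    (fun x : config => (x i = true /\ x j = true) \/ (x i = false /\ x j = false)).
  - apply measurableU; apply measurableI; apply meas_cyl.
  - intro x; destruct (x i), (x j); intuition congruence.
Qed.

Lemma measurable_reindex A (g : Z -> Z) :
  measurable A -> measurable (fun x : config => A (fun i => x (g i))).
Proof.
  intro HA; induction HA.
  - apply (meas_cyl (g i) b).
  - apply meas_compl; auto.
  - apply meas_union with (A := fun n x => A n (fun i => x (g i))); auto.
Qed.

Lemma measurable_exists_in (l : list (list bool)) (F : list bool -> config -> Prop) :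
  (forall w, measurable (F w)) -> measurable (fun x => exists w, In w l /\ F w x).
Proof.
  intro HF; induction l as [|a l IH].
  - apply measurable_ext with (fun _ => False); [apply measurable0 |].
    intro x; split; [tauto | intros [w [[] _]]].
  - apply measurable_ext with (fun x => F a x \/ exists w, In w l /\ F w x).
    + apply measurableU; auto.
    + intro x; simpl; split.
      * intros [H|[w [H1 H2]]]; eauto.
      * intros [w [[<-|H1] H2]]; eauto.
Qed.

Lemma measurable_word_at (w : list bool) (g : nat -> Z) :
  measurable (fun x : config => forall i, (i < length w)%nat -> x (g i) = nth i w false).
Proof.
  apply measurable_forall_nat
    with (A := fun i x => (i < length w)%nat -> x (g i) = nth i w false).
  intro i; apply measurable_const_imp, meas_cyl.
Qed.

Lemma measurable_point (x : config) : measurable (fun y => y = x).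
Proof.
  apply measurable_ext with (fun y : config => forall i, y i = x i).
  - apply measurable_forall_Z; intro i; apply meas_cyl.
  - intro y; split; [intro H; apply functional_extensionality; auto | intros -> i; auto].
Qed.

Lemma measurable_periodic : measurable periodic_configs.
Proof.
  apply measurable_ext with
    (fun x => exists k : nat, forall n : Z, x (n + Z.of_nat (S k))%Z = x n).
  - apply meas_union; intro k.
    apply measurable_forall_Z with (A := fun n x => x (n + Z.of_nat (S k))%Z = x n).
    intro; apply measurable_eq_coord.
  - intro x; split.
    + intros [k Hk]; exists (Z.of_nat (S k)); split; [lia | auto].
    + intros [p [Hp H]]; exists (Z.to_nat p - 1)%nat.
      replace (Z.of_nat (S (Z.to_nat p - 1))) with p by lia; auto.
Qed.

Lemma Un_cv_bounded (u : nat -> R) l : Un_cv u l -> exists M, forall n, u n <= M.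
Proof.
  intro H; destruct (cauchy_bound u (CV_Cauchy u (exist _ l H))) as [M HM].
  exists M; intro n; apply HM; exists n; reflexivity.
Qed.

Lemma infinite_sum_const (a l : R) : infinite_sum (fun _ => a) l -> a = 0.
Proof.
  intro H; destruct (Req_dec a 0) as [|Ha]; [assumption | exfalso].
  apply Rabs_pos_lt in Ha.
  destruct (CV_Cauchy _ (exist _ l H) _ Ha) as [N HN].
  specialize (HN (S N) N ltac:(lia) ltac:(lia)).
  unfold R_dist in HN; simpl in HN.
  replace (sum_f_R0 (fun _ => a) N + a - sum_f_R0 (fun _ => a) N) with a in HN by ring.
  lra.
Qed.

Lemma infinite_sum_bounded_below_false (s : nat -> R) c l :
  0 < c -> (forall n, c <= s n) -> infinite_sum s l -> False.
Proof.
  intros Hc Hs Hl.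
  destruct (Un_cv_bounded _ _ Hl) as [M HM].
  destruct (INR_unbounded (M / c)) as [n Hn].
  assert (Hsum : forall k, INR (S k) * c <= sum_f_R0 s k).
  { induction k; simpl sum_f_R0; [simpl; specialize (Hs 0%nat); lra |].
    rewrite S_INR; specialize (Hs (S k)); lra. }
  assert (M / c * c < INR (S n) * c).
  { apply Rmult_lt_compat_r; [exact Hc |]; rewrite S_INR; lra. }
  replace (M / c * c) with M in H by (field; lra).
  specialize (Hsum n); specialize (HM n); lra.
Qed.

Definition sumL {T} (f : T -> R) (l : list T) : R := fold_right Rplus 0 (map f l).

Lemma sumL_app {T} (f : T -> R) l1 l2 : sumL f (l1 ++ l2) = sumL f l1 + sumL f l2.
Proof. unfold sumL; induction l1; simpl; [ring | rewrite IHl1; ring]. Qed.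

Lemma sumL_map {T U} (f : U -> R) (g : T -> U) l : sumL f (map g l) = sumL (fun x => f (g x)) l.
Proof. unfold sumL; rewrite map_map; reflexivity. Qed.

Lemma eq_sumL {T} (f g : T -> R) l : (forall x, In x l -> f x = g x) -> sumL f l = sumL g l.
Proof. unfold sumL; intro H; f_equal; apply map_ext_in; auto. Qed.

Lemma le_sumL {T} (f g : T -> R) l : (forall x, In x l -> f x <= g x) -> sumL f l <= sumL g l.
Proof.
  unfold sumL; induction l as [|a l IH]; simpl; intro H; [lra |].
  assert (f a <= g a) by (apply H; left; reflexivity).
  assert (fold_right Rplus 0 (map f l) <= fold_right Rplus 0 (map g l))
    by (apply IH; intros x hx; apply H; right; exact hx).
  lra.
Qed.

Lemma sumL_add {T} (f g : T -> R) l : sumL (fun x => f x + g x) l = sumL f l + sumL g l.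
Proof. unfold sumL; induction l; simpl; [ring | rewrite IHl; ring]. Qed.

Lemma sumL_scale {T} (f : T -> R) c l : sumL (fun x => c * f x) l = c * sumL f l.
Proof. unfold sumL; induction l; simpl; [ring | rewrite IHl; ring]. Qed.

Lemma length_words n w : In w (words n) -> length w = n.
Proof.
  revert w; induction n; simpl; intros w H.
  - destruct H as [<-|[]]; reflexivity.
  - apply in_app_or in H; destruct H as [H|H]; apply in_map_iff in H;
      destruct H as [v [<- Hv]]; simpl; auto.
Qed.

Lemma in_words w : In w (words (length w)).
Proof.
  induction w as [|b w IH]; simpl; auto.
  apply in_or_app; destruct b; [right | left]; apply in_map; auto.
Qed.

(* [cyl_from 0 w] is convertible to [cyl w]. *)
Definition cyl_from (k : nat) (w : list bool) : config -> Prop :=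
  fun x => forall i : nat, (i < length w)%nat -> x (Z.of_nat (k + i)) = nth i w false.

Lemma cyl_from_cons k b w x :
  cyl_from k (b :: w) x <-> x (Z.of_nat k) = b /\ cyl_from (S k) w x.
Proof.
  unfold cyl_from; simpl; split.
  - intro H; split.
    + rewrite <- (H 0%nat) by lia; f_equal; lia.
    + intros i Hi; rewrite <- (H (S i)) by lia; f_equal; lia.
  - intros [H1 H2] [|i] Hi.
    + rewrite <- H1; f_equal; lia.
    + rewrite <- H2 by lia; f_equal; lia.
Qed.

Definition window (m : nat) (x : config) : list bool :=
  map (fun i => x (Z.of_nat i - Z.of_nat m)%Z) (seq 0 (S (2 * m))).

Lemma length_window m x : length (window m x) = S (2 * m).
Proof. unfold window; rewrite length_map, length_seq; reflexivity. Qed.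

Lemma nth_window m x i :
  (i < S (2 * m))%nat -> nth i (window m x) false = x (Z.of_nat i - Z.of_nat m)%Z.
Proof.
  intro Hi; unfold window.
  rewrite (nth_indep _ false (x (Z.of_nat 0 - Z.of_nat m)%Z))
    by (rewrite length_map, length_seq; exact Hi).
  rewrite (map_nth (fun i => x (Z.of_nat i - Z.of_nat m)%Z)), seq_nth by exact Hi.
  reflexivity.
Qed.

Lemma window_eq m x w : window m x = w <->
  length w = S (2 * m) /\
  forall i, (i < length w)%nat -> x (Z.of_nat i - Z.of_nat m)%Z = nth i w false.
Proof.
  split.
  - intros <-; rewrite length_window; split; [reflexivity |].
    intros i Hi; rewrite nth_window; auto.
  - intros [Hl Hw]; apply nth_ext with false false; [rewrite length_window; auto |].
    intros i Hi; rewrite length_window in Hi; rewrite nth_window, Hw; auto; lia.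
Qed.

Lemma window_agree m x y : window m y = window m x <->
  forall i, (- Z.of_nat m <= i <= Z.of_nat m)%Z -> y i = x i.
Proof.
  rewrite window_eq, length_window; split.
  - intros [_ H] i Hi.
    specialize (H (Z.to_nat (i + Z.of_nat m)) ltac:(lia)).
    rewrite nth_window in H by lia.
    replace (Z.of_nat (Z.to_nat (i + Z.of_nat m)) - Z.of_nat m)%Z with i in H by lia.
    exact H.
  - intro H; split; [reflexivity |]; intros i Hi.
    rewrite nth_window by exact Hi; apply H; lia.
Qed.

Lemma window_eq_succ m x y : window (S m) y = window (S m) x -> window m y = window m x.
Proof. rewrite !window_agree; intros H i Hi; apply H; lia. Qed.

Lemma window_eq_all x y : (forall m, window m y = window m x) -> y = x.
Proof.
  intro H; apply functional_extensionality; intro i.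
  apply (proj1 (window_agree (Z.to_nat (Z.abs i)) x y) (H _)); lia.
Qed.

Lemma measurable_window_eq m w : measurable (fun x => window m x = w).
Proof.
  apply measurable_ext with
    (fun x => length w = S (2 * m) /\
       forall i, (i < length w)%nat -> x (Z.of_nat i - Z.of_nat m)%Z = nth i w false).
  - apply measurable_const_and, measurable_word_at.
  - intro x; rewrite window_eq; tauto.
Qed.

Definition shift_by (k : Z) (x : config) : config := fun i => x (i + k)%Z.

Lemma window_shift_by m x w : length w = S (2 * m) ->
  (window m (shift_by (Z.of_nat m) x) = w <-> cyl w x).
Proof.
  intro Hl; rewrite window_eq; unfold cyl, shift_by.
  split; [intros [_ H] i Hi | intro H; split; [exact Hl | intros i Hi]];
    rewrite <- ?H by exact Hi; f_equal; lia.
Qed.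

Lemma periodic_shift_by x k : periodic_configs (shift_by k x) <-> periodic_configs x.
Proof.
  unfold periodic_configs, shift_by; split; intros [p [Hp H]]; exists p; split; auto; intro n.
  - specialize (H (n - k)%Z).
    replace (n - k + p + k)%Z with (n + p)%Z in H by lia.
    replace (n - k + k)%Z with n in H by lia; exact H.
  - replace (n + p + k)%Z with ((n + k) + p)%Z by lia; auto.
Qed.

Section ProbabilityMeasure.

Variable mu : (config -> Prop) -> R.
Hypothesis mu_prob : is_prob_measure mu.

Lemma measure_ge0 A : measurable A -> 0 <= mu A.
Proof. destruct mu_prob as [H _]; auto. Qed.

Lemma measureT : mu (fun _ => True) = 1.
Proof. destruct mu_prob as [_ [H _]]; auto. Qed.

Lemma measure_sigma_additive (A : nat -> config -> Prop) :
  (forall n, measurable (A n)) ->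
  (forall m n x, m <> n -> A m x -> A n x -> False) ->
  infinite_sum (fun n => mu (A n)) (mu (fun x => exists n, A n x)).
Proof. destruct mu_prob as [_ [_ H]]; auto. Qed.

Lemma measure0 : mu (fun _ => False) = 0.
Proof.
  apply (infinite_sum_const _ (mu (fun x => exists _ : nat, False))).
  apply (measure_sigma_additive (fun _ _ => False)); [intro; apply measurable0 | tauto].
Qed.

Lemma measureU A B : measurable A -> measurable B ->
  (forall x, A x -> B x -> False) -> mu (fun x => A x \/ B x) = mu A + mu B.
Proof.
  intros HA HB Hdisj.
  set (F := fun n : nat => match n with O => A | 1%nat => B | _ => fun _ => False end).
  assert (HF : forall n, measurable (F n)) by (intros [|[|n]]; auto; apply measurable0).
  assert (HFdisj : forall m n x, m <> n -> F m x -> F n x -> False).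
  { intros [|[|m]] [|[|n]] x Hmn; simpl; try tauto; try lia; eauto. }
  assert (Hsum := measure_sigma_additive F HF HFdisj).
  rewrite (measure_ext mu _ (fun x => A x \/ B x)) in Hsum.
  2:{ intro x; split; [intros [[|[|n]] h]; simpl in h; tauto |].
      intros [h|h]; [exists O | exists 1%nat]; auto. }
  apply (uniqueness_sum (fun n => mu (F n))); [exact Hsum |].
  intros eps Heps; exists 1%nat; intros [|n] Hn; [lia |].
  replace (sum_f_R0 (fun n => mu (F n)) (S n)) with (mu A + mu B).
  - unfold R_dist; rewrite Rminus_diag, Rabs_R0; exact Heps.
  - induction n; simpl in *; [ring |].
    rewrite <- IHn by lia; rewrite measure0; ring.
Qed.

Lemma measureC A : measurable A -> mu A + mu (fun x => ~ A x) = 1.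
Proof.
  intro HA; rewrite <- measureU by (auto; apply meas_compl; auto).
  rewrite <- measureT; apply measure_ext; intro x; tauto.
Qed.

Lemma measureD A B : measurable A -> measurable B -> (forall x, B x -> A x) ->
  mu A = mu B + mu (fun x => A x /\ ~ B x).
Proof.
  intros HA HB HBA; rewrite <- measureU.
  - apply measure_ext; intro x; destruct (classic (B x)); intuition.
  - exact HB.
  - apply measurableI; [exact HA | apply meas_compl, HB].
  - tauto.
Qed.

Lemma le_measure A B : measurable A -> measurable B ->
  (forall x, B x -> A x) -> mu B <= mu A.
Proof.
  intros HA HB HBA; rewrite (measureD A B) by assumption.
  assert (0 <= mu (fun x => A x /\ ~ B x)); [| lra].
  apply measure_ge0, measurableI; [exact HA | apply meas_compl, HB].
Qed.

Lemma measure_le1 A : measurable A -> mu A <= 1.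
Proof. intro HA; rewrite <- measureT; apply le_measure; auto; apply measurableT. Qed.

Lemma measure_gt0_inhabited A : 0 < mu A -> exists x, A x.
Proof.
  intro H; apply NNPP; intro Hn.
  rewrite (measure_ext mu A (fun _ => False)), measure0 in H; [lra |].
  intro x; split; [intro; apply Hn; eauto | tauto].
Qed.

Section Decreasing.

Variable A : nat -> config -> Prop.
Hypothesis A_measurable : forall m, measurable (A m).
Hypothesis A_decreasing : forall m x, A (S m) x -> A m x.

Let A_antitone j k x : (j <= k)%nat -> A k x -> A j x.
Proof. induction 1; auto. Qed.

Let layer k x := A k x /\ ~ A (S k) x.

Let measure_layer k : mu (layer k) = mu (A k) - mu (A (S k)).
Proof.
  rewrite (measureD (A k) (A (S k))); auto; unfold layer; ring.
Qed.

(* [A 0] is the disjoint union of the layers and of the intersection, so the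
   partial sums of the layer measures telescope to [mu (A 0) - mu (A (S n))]. *)
Lemma measure_decreasing_inf c :
  (forall m, c <= mu (A m)) -> c <= mu (fun x => forall m, A m x).
Proof.
  intro Hc.
  set (I := fun x => forall m, A m x).
  assert (HI : measurable I) by (apply measurable_forall_nat; auto).
  assert (Hlayer : forall k, measurable (layer k)).
  { intro k; apply measurableI; auto; apply meas_compl; auto. }
  assert (Hdisj : forall m n x, m <> n -> layer m x -> layer n x -> False).
  { intros m n x Hmn [h1 h2] [h3 h4]; destruct (Nat.lt_ge_cases m n).
    - apply h2, (A_antitone (S m) n); auto.
    - apply h4, (A_antitone (S n) m); auto; lia. }
  assert (Hsplit : mu (A 0%nat) = mu (fun x => exists n, layer n x) + mu I).
  { rewrite <- measureU; auto; [| apply meas_union; auto | ].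
    - apply measure_ext; intro x; split.
      + intro h0; destruct (classic (I x)) as [hI|hI]; [right; exact hI | left].
        apply not_all_ex_not in hI; destruct hI as [m hm]; revert hm.
        induction m as [|m IHm]; intro hm; [contradiction |].
        destruct (classic (A m x)); [exists m; split; auto | auto].
      + intros [[n [h _]]|h]; [apply (A_antitone 0 n); auto; lia | apply h].
    - intros x [n [_ hn]] hI; apply hn, hI. }
  assert (Hpartial : forall n, sum_f_R0 (fun k => mu (layer k)) n = mu (A 0%nat) - mu (A (S n))).
  { induction n; simpl; rewrite measure_layer; try rewrite IHn; ring. }
  assert (Hsum := measure_sigma_additive layer Hlayer Hdisj).
  apply Rnot_lt_le; intro Hlt.
  destruct (Hsum (c - mu I)) as [N HN]; [lra |].
  specialize (HN N (le_n _)); rewrite Hpartial in HN; unfold R_dist in HN.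
  apply Rabs_def2 in HN; specialize (Hc (S N)); lra.
Qed.

End Decreasing.

Lemma sumL_measure_cyl_from n k A : measurable A ->
  sumL (fun w => mu (fun x => cyl_from k w x /\ A x)) (words n) = mu A.
Proof.
  revert k A; induction n as [|n IH]; intros k A HA.
  - unfold sumL; simpl; rewrite Rplus_0_r; apply measure_ext; intro x.
    unfold cyl_from; simpl; split; [tauto | split; [intros; lia | exact H]].
  - simpl; rewrite sumL_app, !sumL_map.
    assert (Hbit : forall b w,
      mu (fun x => cyl_from k (b :: w) x /\ A x) =
      mu (fun x => cyl_from (S k) w x /\ (x (Z.of_nat k) = b /\ A x))).
    { intros b w; apply measure_ext; intro x; rewrite cyl_from_cons; tauto. }
    rewrite (eq_sumL _ _ _ (fun w _ => Hbit false w)), (eq_sumL _ _ _ (fun w _ => Hbit true w)).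
    rewrite !IH by (apply measurableI; [apply meas_cyl | exact HA]).
    rewrite <- measureU; try (apply measurableI; [apply meas_cyl | exact HA]).
    + apply measure_ext; intro x; destruct (x (Z.of_nat k)); intuition congruence.
    + intros x [h1 _] [h2 _]; congruence.
Qed.

(* Words of probability below [exp (- L)] are paid for by their entropy term,
   the others by the linear term. *)
Lemma le_xlogx_linear p q L c : 0 <= q <= p -> p <= 1 -> 0 < L -> q < c ->
  q <= - xlogx p / L + c * exp L * p.
Proof.
  intros Hq Hp1 HL Hqc.
  assert (HeL : 0 < exp L) by apply exp_pos.
  unfold xlogx; destruct (Req_EM_T p 0) as [->|Hp0]; [unfold Rdiv; lra |].
  assert (Hp : 0 < p) by lra.
  destruct (Rle_lt_dec (exp (- L)) p) as [Hbig|Hsmall].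
  - assert (Hln : ln p <= 0).
    { destruct (Rle_lt_or_eq_dec _ _ Hp1) as [h|h]; [| rewrite h, ln_1; lra].
      rewrite <- ln_1; left; apply ln_increasing; assumption. }
    assert (0 <= - (p * ln p) / L)
      by (apply Rmult_le_pos; [nra | left; apply Rinv_0_lt_compat, HL]).
    assert (1 <= exp L * p).
    { rewrite exp_Ropp in Hbig.
      apply (Rmult_le_compat_l (exp L)) in Hbig; [| lra].
      rewrite Rinv_r in Hbig; lra. }
    nra.
  - assert (Hln : ln p < - L) by (rewrite <- (ln_exp (- L)); apply ln_increasing; auto).
    assert (q <= - (p * ln p) / L).
    { apply (Rmult_le_reg_l L); [exact HL |].
      replace (L * (- (p * ln p) / L)) with (p * - ln p) by (field; lra); nra. }
    assert (0 <= c * exp L * p) by (apply Rmult_le_pos; [apply Rmult_le_pos |]; lra).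
    lra.
Qed.

(* If a set of positive measure [eta] met every cylinder of length [j+1] in mass
   less than [c], then summing [le_xlogx_linear] over these cylinders would give
   [eta <= S(pi_j mu) / L + c e^L]; the choice of [L] and [c] makes this [<= eta / 2]. *)
Lemma heavy_cylinder_of_bounded_entropy N B :
  measurable N -> 0 < mu N -> (forall j, entropy_j mu j <= B) ->
  exists c, 0 < c /\
    forall j, exists w, In w (words (S j)) /\ c <= mu (fun x => cyl w x /\ N x).
Proof.
  intros HN Heta HB; set (eta := mu N) in *.
  set (L := 4 * (Rabs B + 1) / eta).
  assert (HL : 0 < L).
  { apply Rmult_lt_0_compat; [pose proof (Rabs_pos B); lra | apply Rinv_0_lt_compat, Heta]. }
  set (c := exp (- L) * eta / 4).
  assert (Hc : c * exp L = eta / 4).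
  { unfold c; rewrite exp_Ropp; field; apply Rgt_not_eq, exp_pos. }
  exists c; split; [unfold c; pose proof (exp_pos (- L)); apply Rmult_lt_0_compat; nra |].
  intro j; apply NNPP; intro Hlight.
  set (W := words (S j)).
  assert (Hcyl : forall w, measurable (cyl w))
    by (intro w; apply (measurable_word_at w (fun i => Z.of_nat i))).
  assert (Hle : sumL (fun w => mu (fun x => cyl w x /\ N x)) W <=
     sumL (fun w => - / L * xlogx (mu (cyl w)) + c * exp L * mu (cyl w)) W).
  { apply le_sumL; intros w Hw.
    replace (- / L * xlogx (mu (cyl w))) with (- xlogx (mu (cyl w)) / L) by (unfold Rdiv; ring).
    apply le_xlogx_linear; [split | apply measure_le1, Hcyl | exact HL |].
    - apply measure_ge0, measurableI; auto.
    - apply le_measure; [apply Hcyl | apply measurableI; auto | tauto].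
    - apply Rnot_le_lt; intro Hheavy; apply Hlight; exists w; auto. }
  rewrite sumL_add, !sumL_scale in Hle.
  replace (sumL (fun w => mu (fun x => cyl w x /\ N x)) W) with eta in Hle
    by (symmetry; exact (sumL_measure_cyl_from (S j) 0 N HN)).
  replace (sumL (fun w => mu (cyl w)) W) with 1 in Hle.
  2:{ rewrite <- measureT, <- (sumL_measure_cyl_from (S j) 0 _ measurableT).
      apply eq_sumL; intros w _; apply measure_ext; intro x; unfold cyl_from, cyl; tauto. }
  assert (HBj : - sumL (fun w => xlogx (mu (cyl w))) W <= Rabs B + 1).
  { pose proof (Rle_abs B); enough (- sumL (fun w => xlogx (mu (cyl w))) W <= B) by lra.
    exact (HB j). }
  assert (- / L * sumL (fun w => xlogx (mu (cyl w))) W <= eta / 4).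
  { replace (eta / 4) with (/ L * (Rabs B + 1))
      by (unfold L; field; pose proof (Rabs_pos B); split; lra).
    rewrite Ropp_mult_distr_l_reverse, Ropp_mult_distr_r.
    apply Rmult_le_compat_l; [left; apply Rinv_0_lt_compat, HL | exact HBj]. }
  rewrite Hc in Hle; lra.
Qed.

(* A König-type argument in measure: the points all of whose centred windows
   are heavy in [N] form a set of mass at least [c], and any such point is an atom. *)
Lemma atom_of_heavy_windows N c : measurable N -> 0 < c ->
  (forall m, exists w, c <= mu (fun y => window m y = w /\ N y)) ->
  exists x, N x /\ c <= mu (fun y => y = x).
Proof.
  intros HN Hc Hwin.
  set (heavy m x := c <= mu (fun y => window m y = window m x /\ N y)).
  assert (Hball : forall m w, measurable (fun y => window m y = w /\ N y))
    by (intros; apply measurableI; [apply measurable_window_eq | exact HN]).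
  assert (Hheavy : forall m, measurable (fun x => heavy m x /\ N x)).
  { intro m; apply measurableI; [| exact HN].
    apply measurable_ext with (fun x => exists w, In w (words (S (2 * m))) /\
      (c <= mu (fun y => window m y = w /\ N y) /\ window m x = w)).
    - apply measurable_exists_in; intro w; apply measurable_const_and, measurable_window_eq.
    - intro x; split; [intros [w [_ [h <-]]]; exact h | intro h].
      exists (window m x); split; [| split; [exact h | reflexivity]].
      rewrite <- (length_window m x); apply in_words. }
  assert (Hmass : c <= mu (fun x => forall m, heavy m x /\ N x)).
  { apply measure_decreasing_inf; [exact Hheavy | |].
    - intros m x [h hN]; split; [| exact hN].
      eapply Rle_trans; [exact h |].
      apply le_measure; auto; intros y [hy hyN]; split; [apply window_eq_succ |]; auto.
    - intro m; destruct (Hwin m) as [w Hw].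
      eapply Rle_trans; [exact Hw |].
      apply le_measure; auto; intros y [hy hyN]; split; [| exact hyN].
      unfold heavy; rewrite hy; exact Hw. }
  destruct (measure_gt0_inhabited _ (Rlt_le_trans _ _ _ Hc Hmass)) as [x Hx].
  exists x; split; [exact (proj2 (Hx 0%nat)) |].
  rewrite (measure_ext mu _ (fun y => forall m, window m y = window m x /\ N y)).
  - apply measure_decreasing_inf; auto.
    + intros m y [hy hyN]; split; [apply window_eq_succ |]; auto.
    + intro m; exact (proj1 (Hx m)).
  - intro y; split; [intros -> m; split; [reflexivity | exact (proj2 (Hx m))] |].
    intro H; apply window_eq_all; intro m; apply H.
Qed.

Section TranslationInvariant.

Hypothesis mu_invariant : translation_invariant mu.

Lemma measure_shift_by m A : measurable A ->
  mu (fun x => A (shift_by (Z.of_nat m) x)) = mu A.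
Proof.
  revert A; induction m as [|m IH]; intros A HA.
  - apply measure_ext; intro x.
    replace (shift_by (Z.of_nat 0) x) with x; [tauto |].
    apply functional_extensionality; intro i; unfold shift_by; f_equal; lia.
  - rewrite <- (IH A HA), <- (mu_invariant (fun x => A (shift_by (Z.of_nat m) x))).
    + apply measure_ext; intro x.
      replace (shift_by (Z.of_nat (S m)) x) with (shift_by (Z.of_nat m) (Defs.shift x)); [tauto |].
      apply functional_extensionality; intro i; unfold shift_by, Defs.shift; f_equal; lia.
    + exact (measurable_reindex A (fun i => (i + Z.of_nat m)%Z) HA).
Qed.

Lemma measure_window_nonperiodic m w : length w = S (2 * m) ->
  mu (fun y => window m y = w /\ ~ periodic_configs y) =
  mu (fun y => cyl w y /\ ~ periodic_configs y).
Proof.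
  intro Hl; rewrite <- (measure_shift_by m).
  - apply measure_ext; intro x.
    rewrite window_shift_by, periodic_shift_by by exact Hl; tauto.
  - apply measurableI; [apply measurable_window_eq | apply meas_compl, measurable_periodic].
Qed.

(* The translates of a non-periodic point are pairwise distinct atoms of equal
   mass, so their masses can only be summable if they vanish. *)
Lemma measure_nonperiodic_point x : ~ periodic_configs x -> mu (fun y => y = x) = 0.
Proof.
  intro Hx.
  set (translate k y := shift_by (Z.of_nat k) y = x).
  assert (Htranslate : forall k, mu (translate k) = mu (fun y => y = x))
    by (intro k; exact (measure_shift_by k _ (measurable_point x))).
  assert (Hdisj : forall m n y, (m < n)%nat -> translate m y -> translate n y -> False).
  { intros m n y Hmn Hm Hn; unfold translate in Hm, Hn; apply Hx.
    exists (Z.of_nat n - Z.of_nat m)%Z; split; [lia |]; intro i.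
    transitivity (y (i + Z.of_nat n)%Z);
      [rewrite <- Hm | rewrite <- Hn]; unfold shift_by; f_equal; lia. }
  assert (Hsum : infinite_sum (fun k => mu (translate k)) (mu (fun y => exists k, translate k y))).
  { apply measure_sigma_additive.
    - intro k; exact (measurable_reindex _ (fun i => (i + Z.of_nat k)%Z) (measurable_point x)).
    - intros m n y Hmn; destruct (Nat.lt_gt_cases m n) as [[lt|gt] _]; [exact Hmn | |].
      + exact (Hdisj m n y lt).
      + intros hm hn; exact (Hdisj n m y gt hn hm). }
  destruct (Rle_lt_or_eq_dec _ _ (measure_ge0 _ (measurable_point x))) as [Hpos|]; [| auto].
  exfalso; refine (infinite_sum_bounded_below_false _ _ _ Hpos _ Hsum).
  intro k; rewrite Htranslate; apply Rle_refl.
Qed.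

Lemma measure_nonperiodic_bounded_entropy B : (forall j, entropy_j mu j <= B) ->
  mu (fun x => ~ periodic_configs x) = 0.
Proof.
  intro HB.
  assert (HN : measurable (fun x => ~ periodic_configs x))
    by apply meas_compl, measurable_periodic.
  destruct (Rle_lt_or_eq_dec _ _ (measure_ge0 _ HN)) as [Hpos|]; [exfalso | auto].
  destruct (heavy_cylinder_of_bounded_entropy _ B HN Hpos HB) as [c [Hc Hcyl]].
  destruct (atom_of_heavy_windows _ c HN Hc) as [x [Hx Hatom]].
  - intro m; destruct (Hcyl (2 * m)%nat) as [w [Hw Hcw]]; exists w.
    rewrite measure_window_nonperiodic by exact (length_words _ _ Hw); exact Hcw.
  - rewrite (measure_nonperiodic_point x Hx) in Hatom; lra.
Qed.

End TranslationInvariant.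

End ProbabilityMeasure.

Theorem lemma5p1 (mu : (config -> Prop) -> R) :
  is_prob_measure mu ->
  translation_invariant mu ->
  (exists S : R, Un_cv (entropy_j mu) S) ->
  measurable periodic_configs /\ mu periodic_configs = 1.
Proof.
  intros Hmu Hinv [S HS]; split; [exact measurable_periodic |].
  destruct (Un_cv_bounded _ _ HS) as [B HB].
  pose proof (measureC mu Hmu _ measurable_periodic) as Hsplit.
  rewrite (measure_nonperiodic_bounded_entropy mu Hmu Hinv B HB) in Hsplit; lra.
Qed.
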